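(* Let $X,Y$ be real Banach spaces, $C\subseteq X$ a nonempty closed set, $f:X\to\mathbb{R}\cup\{+\infty\}$ and $g:X\to Y$. Let $x_0$ be a local solution of the problem $\min\{f(x)\,;\ g(x)=0,\ x\in C\}$. Assume: (H_f) $f$ is Gâteaux differentiable at $x_0$ and there exist $r>0$ and $K_f>0$ such that $f(x)-f(x')\le K_f\|x-x'\|_X$ for all $x,x'\in B_X(x_0,r)$; (H_g) $g$ is Gâteaux differentiable at $x_0$; and that the system ''$x\in C$, $g(x)=0$'' is calm at $x_0$, i.e. there exist $a>0$ and $s>0$ such that $d_{g^{-1}(0)\cap C}(x)\le a\|g(x)\|_Y$ for all $x\in B_X(x_0,s)\cap C$. Then: (i) if $x_0\in\operatorname{int}(C)$, there exists $y^*\in Y^*$ with $\|y^*\|_{Y^*}\le K_f a$ such that $Df(x_0)+D^*g(x_0)y^*=0$; (ii) if $g$ is locally Lipschitz around $x_0$ with constant $K_g>0$, then $$Df(x_0)h+K_fa\|Dg(x_0)h\|_Y+K_f(1+K_ga)\,d^-_C(x_0;h)\ge 0\quad\forall h\in X;$$ in particular there exists $y^*\in Y^*$ with $\|y^*\|_{Y^*}\le K_fa$ such that $0\in Df(x_0)+D^*g(x_0)y^*+N_C(x_0)$. If in addition $K(C,x_0)$ is convex, then there exists $y^*\in Y^*$ with $\|y^*\|_{Y^*}\le K_fa$ such that $0\in Df(x_0)+D^*g(x_0)y^*+(K(C,x_0))^0$.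
   Context: A local solution $x_0$ is a feasible point ($x_0\in C$, $g(x_0)=0$) such that $f(x_0)\le f(x)$ for all feasible $x$ in some neighbourhood of $x_0$. $B_X(x,r)$ is the closed ball. A map $\varphi$ is Gâteaux differentiable at $x_0$ if there is a bounded linear operator $D\varphi(x_0)$ with $\lim_{\tau\to0^+}(\varphi(x_0+\tau h)-\varphi(x_0))/\tau=D\varphi(x_0)h$ for all $h$; $D^*g(x_0):Y^*\to X^*$ is the adjoint of $Dg(x_0)$. For a nonempty $A\subseteq X$, $d_A(x)=\inf_{a\in A}\|x-a\|_X$. For $x\in A$: the lower Dini derivative is $d^-_A(x;h)=\liminf_{\tau\to0^+}d_A(x+\tau h)/\tau$; the contingent cone is $K(A,x)=\{h\in X: d^-_A(x;h)=0\}$; the Clarke tangent cone is $T_A(x)=\{h\in X:\lim_{y\to x,\,y\in A,\,\tau\to0^+}d_A(y+\tau h)/\tau=0\}$; the Clarke normal cone is $N_A(x)=T_A(x)^0$, where for a cone $\mathcal K$, $\mathcal K^0=\{x^*\in X^*:\langle x^*,h\rangle\le0\ \forall h\in\mathcal K\}$. *)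

From HB Require Import structures.
From mathcomp Require Import all_boot all_order all_algebra.
From mathcomp Require Import all_classical all_reals all_analysis.
Set Implicit Arguments. Unset Strict Implicit. Unset Printing Implicit Defensive.
Import Order.TTheory GRing.Theory Num.Theory.
Import numFieldNormedType.Exports.
Local Open Scope classical_set_scope.
Local Open Scope ring_scope.

Section Defs.
Variable R : realType.

Definition is_linear (U V : normedModType R) (L : U -> V) : Prop :=
  forall (c : R) (u v : U), L (c *: u + v) = c *: L u + L v.

Definition bounded_linear (U V : normedModType R) (L : U -> V) : Prop :=
  is_linear L /\ continuous L.

Definition bounded_functional (U : normedModType R) (xs : U -> R) : Prop :=
  @bounded_linear U R^o xs.

Definition dual_norm (U : normedModType R) (ys : U -> R) : R :=
  sup [set `|ys y| | y in [set y : U | `|y| <= 1]].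

Definition gateaux (U V : normedModType R) (g : U -> V) (x0 : U) (D : U -> V)
  : Prop :=
  bounded_linear D /\
  forall h : U, (fun t : R => t^-1 *: (g (x0 + t *: h) - g x0)) @ 0^'+ --> D h.

Definition gateaux_e (U : normedModType R) (f : U -> \bar R) (x0 : U)
  (D : U -> R) : Prop :=
  f x0 \is a fin_num /\ bounded_functional D /\
  forall h : U,
    (fun t : R => ((f (x0 + t *: h)%R - f x0) * (t^-1)%:E)%E) @ 0^'+ --> (D h)%:E.

Definition dist_set (U : normedModType R) (A : set U) (x : U) : R :=
  inf [set `|x - a| | a in A].

Definition dini_lower (U : normedModType R) (A : set U) (x h : U) : \bar R :=
  limf_einf (fun t : R => (dist_set A (x + t *: h) / t)%:E) 0^'+.

Definition contingent_cone (U : normedModType R) (A : set U) (x : U) : set U :=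
  [set h | (dini_lower A x h = 0)%E].

Definition clarke_tangent_cone (U : normedModType R) (A : set U) (x : U)
  : set U :=
  [set h | forall e : R, 0 < e -> exists2 d : R, 0 < d &
     forall y : U, A y -> `|y - x| < d -> forall t : R, 0 < t -> t < d ->
       `|dist_set A (y + t *: h) / t| < e].

Definition polar_cone (U : normedModType R) (K : set U) : set (U -> R) :=
  [set xs | bounded_functional xs /\ forall h, K h -> xs h <= 0].

Definition clarke_normal_cone (U : normedModType R) (A : set U) (x : U)
  : set (U -> R) :=
  polar_cone (clarke_tangent_cone A x).

Definition convex_set_of (U : normedModType R) (K : set U) : Prop :=
  forall u v : U, K u -> K v -> forall t : R, 0 <= t <= 1 ->
    K (t *: u + (1 - t) *: v).

End Defs.

From HB Require Import structures.
From mathcomp Require Import all_boot all_order all_algebra.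
From mathcomp Require Import all_classical all_reals all_analysis.
From mathcomp Require Import ring lra.
Set Implicit Arguments. Unset Strict Implicit. Unset Printing Implicit Defensive.
Import Order.TTheory GRing.Theory Num.Theory.
Import numFieldNormedType.Exports.
Local Open Scope classical_set_scope.
Local Open Scope ring_scope.

(* Calmness turns the constrained minimum into a local minimum on [C] of the
   exact penalty [f + Kf a |g|]: Clarke's exact penalization with the distance
   to [g^-1(0) /\ C] gives [f x0 <= f x + Kf d(x) <= f x + Kf a |g x|].
   Dividing the penalty inequality at [x0 + t h] by [t] and letting [t -> 0+]
   gives [Df h + Kf a |Dg h| >= 0] for every [h] when [x0] is interior.  When
   [g] is Lipschitz the penalty is Lipschitz too, so penalizing once more, now
   by the distance to [C], only adds [Kf (1 + Kg a) d_C(x0 + t h) / t]; its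
   liminf is the Dini derivative, which vanishes on the contingent cone and
   tends to 0 along the Clarke tangent cone.  Finally, on any convex set [T]
   where [Df h + K |Dg h| >= 0], Hahn-Banach applied to the sublinear function
   [y |-> inf {Df k + K |y - Dg k| | k in cone T}] yields a functional [-y*]
   dominated by it; [y*] is the multiplier, of norm at most [K]. *)

Section SublinearHahnBanach.
Variables (R : realType) (V : lmodType R) (S : set (V * R)).

Hypothesis SD : forall y1 r1 y2 r2,
  S (y1, r1) -> S (y2, r2) -> S (y1 + y2, r1 + r2).
Hypothesis SZ : forall y r t, 0 < t -> S (y, r) -> S (t *: y, t * r).
Hypothesis S_total : forall y, exists r, S (y, r).
Hypothesis S0_ge0 : forall r, S (0, r) -> 0 <= r.

Definition dominated_graph (G : set (V * R)) :=
  [/\ forall c y1 b1 y2 b2,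
        G (y1, b1) -> G (y2, b2) -> G (c *: y1 + y2, c * b1 + b2),
      forall y b1 b2, G (y, b1) -> G (y, b2) -> b1 = b2 &
      forall y b r, G (y, b) -> S (y, r) -> b <= r].

Lemma dominated_graph_bigcup (F : set (set (V * R))) :
  F `<=` dominated_graph -> total_on F subset ->
  dominated_graph (\bigcup_(G in F) G).
Proof.
move=> FP Ftot; split.
- move=> c y1 b1 y2 b2 [G1 FG1 G1y] [G2 FG2 G2y].
  have [G12|G21] := Ftot _ _ FG1 FG2.
  + by exists G2 => //; have [lin _ _] := FP _ FG2; exact: lin (G12 _ G1y) G2y.
  + by exists G1 => //; have [lin _ _] := FP _ FG1; exact: lin G1y (G21 _ G2y).
- move=> y b1 b2 [G1 FG1 G1y] [G2 FG2 G2y].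
  have [G12|G21] := Ftot _ _ FG1 FG2.
  + by have [_ fun2 _] := FP _ FG2; exact: fun2 (G12 _ G1y) G2y.
  + by have [_ fun1 _] := FP _ FG1; exact: fun1 G1y (G21 _ G2y).
- by move=> y b r [G FG Gy] Syr; have [_ _ dom] := FP _ FG; exact: dom Gy Syr.
Qed.

Lemma dominated_graph_origin : dominated_graph [set (0, 0)].
Proof.
split.
- by move=> c y1 b1 y2 b2 /= [-> ->] [-> ->]; rewrite scaler0 mulr0 !addr0.
- by move=> y b1 b2 /= [_ ->] [_ ->].
- by move=> y b r /= [-> ->]; exact: S0_ge0.
Qed.

Section Extension.
Variables (G : set (V * R)) (x : V).
Hypothesis domG : dominated_graph G.
Hypothesis G00 : G (0, 0).
Hypothesis Gx : forall b, ~ G (x, b).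

Lemma extension_value : exists c : R,
  (forall y b r, G (y, b) -> S (y - x, r) -> b - r <= c) /\
  (forall y b r, G (y, b) -> S (y + x, r) -> c <= r - b).
Proof.
have [Glin _ Gdom] := domG.
pose L := [set z | exists y b r, [/\ G (y, b), S (y - x, r) & z = b - r]].
pose U := [set z | exists y b r, [/\ G (y, b), S (y + x, r) & z = r - b]].
have LU l u : L l -> U u -> l <= u.
  move=> [y [b [r [Gyb Syr ->]]]] [z [d [r' [Gzd Szr' ->]]]].
  have := SD Syr Szr'; rewrite addrACA addNr addr0 => S2.
  have := Gdom _ _ _ (Glin 1 _ _ _ _ Gyb Gzd); rewrite scale1r mul1r => /(_ _ S2).
  lra.
have [r0 Sr0] := S_total (- x); have [r1 Sr1] := S_total x.
have Une : U !=set0 by exists (r1 - 0), 0, 0, r1; rewrite add0r.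
have Lne : L !=set0 by exists (0 - r0), 0, 0, r0; rewrite sub0r.
have [u Uu] := Une.
exists (sup L); split => [y b r Gyb Syr|y b r Gyb Syr].
- by apply: ub_le_sup; [exists u => l Ll; exact: LU | exists y, b, r].
- by apply: ge_sup => // l Ll; apply: LU Ll _; exists y, b, r.
Qed.

Definition graph_extension (c : R) : set (V * R) :=
  [set p | exists y b t, G (y, b) /\ p = (y + t *: x, b + t * c)].

Lemma graph_extension_linear c : forall c' y1 b1 y2 b2,
  graph_extension c (y1, b1) -> graph_extension c (y2, b2) ->
  graph_extension c (c' *: y1 + y2, c' * b1 + b2).
Proof.
have [Glin _ _] := domG.
move=> c' _ _ _ _ [z1 [d1 [t1 [Gzd1 [-> ->]]]]] [z2 [d2 [t2 [Gzd2 [-> ->]]]]].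
exists (c' *: z1 + z2), (c' * d1 + d2), (c' * t1 + t2); split; first exact: Glin.
congr (_, _); last ring.
by rewrite scalerDr scalerDl scalerA addrACA.
Qed.

Lemma graph_extension_functional c : forall y b1 b2,
  graph_extension c (y, b1) -> graph_extension c (y, b2) -> b1 = b2.
Proof.
have [Glin Gfun _] := domG.
move=> y _ _ [z1 [d1 [t1 [Gzd1 [E1 ->]]]]] [z2 [d2 [t2 [Gzd2 [E2 ->]]]]].
have [eq_t|t12] := eqVneq t1 t2.
  move: E2; rewrite E1 -eq_t => /addIr Ez.
  by rewrite -Ez in Gzd2; rewrite (Gfun _ _ _ Gzd1 Gzd2).
exfalso; apply: (@Gx ((t2 - t1)^-1 * (d1 - d2))).
have Gdiff := Glin ((t2 - t1)^-1) _ _ _ _ (Glin (-1) _ _ _ _ Gzd2 Gzd1) G00.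
rewrite !addr0 scaleN1r mulN1r [- d2 + d1]addrC in Gdiff.
suff -> : x = (t2 - t1)^-1 *: (- z2 + z1) by [].
have -> : - z2 + z1 = (t2 - t1) *: x.
  by apply: (addIr (t1 *: x)); rewrite -addrA -E1 E2 addKr scalerBl subrK.
by rewrite scalerA mulVf ?scale1r // subr_eq0 eq_sym.
Qed.

Lemma graph_extension_dominated c :
  (forall y b r, G (y, b) -> S (y - x, r) -> b - r <= c) ->
  (forall y b r, G (y, b) -> S (y + x, r) -> c <= r - b) ->
  forall y b r, graph_extension c (y, b) -> S (y, r) -> b <= r.
Proof.
have [Glin _ Gdom] := domG.
move=> cL cU _ _ r [z [d [t [Gzd [-> ->]]]]] Sr.
have [t0|t0|t0] := ltgtP t 0; last first.
- by move: Sr; rewrite t0 scale0r mul0r !addr0; exact: Gdom.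
- have Gz' := Glin t^-1 _ _ _ _ Gzd G00; rewrite !addr0 in Gz'.
  have := SZ (_ : 0 < t^-1) Sr; rewrite invr_gt0 => /(_ t0).
  rewrite scalerDr scalerA mulVf ?gt_eqF // scale1r => /(cU _ _ _ Gz').
  rewrite -mulrBr -(ler_pM2l t0) mulrA mulfV ?gt_eqF // mul1r; lra.
- have s0 : 0 < - t by rewrite oppr_gt0.
  have Gz' := Glin (- t)^-1 _ _ _ _ Gzd G00; rewrite !addr0 in Gz'.
  have E : (- t)^-1 * t = -1 by rewrite invrN mulNr mulVf ?lt_eqF.
  have := SZ (_ : 0 < (- t)^-1) Sr; rewrite invr_gt0 => /(_ s0).
  rewrite scalerDr scalerA E scaleN1r => /(cL _ _ _ Gz').
  rewrite -mulrBr -(ler_pM2l s0) mulrA mulfV ?gt_eqF // mul1r; lra.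
Qed.

Lemma dominated_graph_extend : exists2 G', dominated_graph G' & G `<` G'.
Proof.
have [c [cL cU]] := extension_value.
exists (graph_extension c); first split.
- exact: graph_extension_linear.
- exact: graph_extension_functional.
- exact: graph_extension_dominated.
split.
  by move=> [y b] Gyb; exists y, b, 0; rewrite scale0r mul0r !addr0.
move=> ext; apply: (@Gx c); apply: ext.
by exists 0, 0, 1; rewrite scale1r mul1r !add0r.
Qed.

End Extension.

Theorem sublinear_hahn_banach : exists l : V -> R,
  (forall c u v, l (c *: u + v) = c * l u + l v) /\
  (forall y r, S (y, r) -> l y <= r).
Proof.
have [A [domA Amax]] := Zorn_bigcup dominated_graph_bigcup.
have A00 : A (0, 0).
  have [[[y b] Ayb]|A0] := pselect (A !=set0).
    have [Alin _ _] := domA.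
    by have := Alin (-1) y b y b Ayb Ayb; rewrite scaleN1r addNr mulN1r addNr.
  apply: contra_notP (Amax _ ^~ dominated_graph_origin) => A00; split.
    by move=> [y b] Ayb; exfalso; apply: A0; exists (y, b).
  by move=> /(_ (0, 0) erefl).
have Atot y : exists b, A (y, b).
  apply/not_existsP => Ay.
  have [G' domG' AG'] := dominated_graph_extend domA A00 Ay.
  exact: Amax AG' domG'.
have [l Al] := choice Atot; have [Alin Afun Adom] := domA.
exists l; split => [c u v|y r]; last exact: Adom (Al y).
exact: Afun (Al _) (Alin c _ _ _ _ (Al u) (Al v)).
Qed.

End SublinearHahnBanach.

Section LinearMaps.
Variables (R : realType) (U W : normedModType R).
Implicit Type L : U -> W.

Lemma is_linear0 L : is_linear L -> L 0 = 0.
Proof.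
move=> Ll; have := Ll 1 0 0; rewrite scale1r !addr0 scale1r => E.
by apply: (addIr (L 0)); rewrite add0r -E.
Qed.

Lemma is_linearD L : is_linear L -> forall u v, L (u + v) = L u + L v.
Proof. by move=> Ll u v; rewrite -{1}[u]scale1r Ll scale1r. Qed.

Lemma is_linearN L : is_linear L -> forall u, L (- u) = - L u.
Proof.
by move=> Ll u; rewrite -scaleN1r -[_ *: u]addr0 Ll is_linear0 // addr0 scaleN1r.
Qed.

Lemma is_linearZ L : is_linear L -> forall c u, L (c *: u) = c *: L u.
Proof. by move=> Ll c u; rewrite -[c *: u]addr0 Ll is_linear0 // addr0. Qed.

Lemma is_linearB L : is_linear L -> forall u v, L (u - v) = L u - L v.
Proof. by move=> Ll u v; rewrite is_linearD // is_linearN. Qed.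

Lemma lipschitz_continuous L (k : R) :
  (forall x y, `|L x - L y| <= k * `|x - y|) -> continuous L.
Proof.
move=> Lk x; apply/cvgrPdist_lt => e e0.
have k1 : 0 < `|k| + 1 by rewrite ltr_wpDl.
near=> y; apply: (le_lt_trans (Lk x y)).
apply: (le_lt_trans (y := (`|k| + 1) * `|x - y|)).
  by apply: ler_wpM2r => //; rewrite (le_trans (ler_norm k)) // lerDl.
rewrite mulrC -ltr_pdivlMr //; near: y.
by apply: (@cvgr_dist_lt _ _ _ (nbhs x) _ id x cvg_id); rewrite divr_gt0.
Unshelve. all: by end_near. Qed.

End LinearMaps.

Section Functionals.
Variables (R : realType) (U : normedModType R).
Implicit Type l : U -> R.

Lemma bounded_functional_le_norm l (K : R) : is_linear (l : U -> R^o) ->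
  (forall y, `|l y| <= K * `|y|) -> bounded_functional l.
Proof.
move=> ll lK; split => //; apply: (lipschitz_continuous (k := K)) => x y.
by rewrite -(is_linearB ll); exact: lK.
Qed.

Lemma dual_norm_le l (K : R) : 0 <= K ->
  (forall y, `|l y| <= K * `|y|) -> dual_norm l <= K.
Proof.
move=> K0 lK; apply: ge_sup; first by exists `|l 0|, 0 => //=; rewrite normr0.
move=> _ [y /= y1 <-]; apply: (le_trans (lK y)).
by rewrite -[leRHS]mulr1 ler_wpM2l.
Qed.

Lemma bounded_functional_comp (Y : normedModType R) (Df : U -> R) (Dg : U -> Y)
    (ys : Y -> R) : bounded_functional Df -> bounded_linear Dg ->
  bounded_functional ys -> bounded_functional (fun h => - (Df h + ys (Dg h))).
Proof.
move=> [Dfl Dfc] [Dgl Dgc] [ysl ysc]; split.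
  by move=> c u v /=; rewrite Dfl Dgl ysl /GRing.scale /=; ring.
move=> x; apply: cvgN; apply: cvgD; first exact: Dfc.
exact: continuous_comp (Dgc x) (ysc (Dg x)).
Qed.

Lemma polar_cone_setT l : polar_cone setT l -> forall h, l h = 0.
Proof.
move=> [[ll _] l_le0] h; apply/eqP; rewrite eq_le l_le0 //=.
by rewrite -oppr_le0 -(is_linearN ll) l_le0.
Qed.

End Functionals.

Section ConicHull.
Variables (R : realType) (X : normedModType R) (T : set X).

Definition conic_hull : set X :=
  [set k | k = 0 \/ exists2 t, 0 < t & exists2 h, T h & k = t *: h].

Lemma conic_hull_sub : T `<=` conic_hull.
Proof. by move=> h Th; right; exists 1 => //; exists h; rewrite ?scale1r. Qed.

Lemma conic_hullZ t k : 0 < t -> conic_hull k -> conic_hull (t *: k).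
Proof.
move=> t0 [->|[u u0 [h Th ->]]]; first by left; rewrite scaler0.
by right; exists (t * u); [rewrite mulr_gt0 | exists h; rewrite // scalerA].
Qed.

Lemma conic_hullD k1 k2 : convex_set_of T ->
  conic_hull k1 -> conic_hull k2 -> conic_hull (k1 + k2).
Proof.
move=> convT [->|[t1 t10 [h1 T1 ->]]]; first by rewrite add0r.
move=> [->|[t2 t20 [h2 T2 ->]]].
  by rewrite addr0; right; exists t1 => //; exists h1.
have t0 : 0 < t1 + t2 by rewrite addr_gt0.
pose mu := t1 / (t1 + t2).
have mu01 : 0 <= mu <= 1.
  by rewrite /mu divr_ge0 ?(ltW t0) ?(ltW t10) //= ler_pdivrMr // mul1r lerDl ltW.
right; exists (t1 + t2) => //.
exists (mu *: h1 + (1 - mu) *: h2); first exact: convT.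
have -> : 1 - mu = t2 / (t1 + t2) by rewrite /mu; field; rewrite gt_eqF.
by rewrite scalerDr !scalerA !mulrA !(mulrC (t1 + t2)) !mulfK ?gt_eqF.
Qed.

End ConicHull.

Section LagrangeMultiplier.
Variables (R : realType) (X Y : normedModType R) (Df : X -> R) (Dg : X -> Y).
Variables (K : R) (T : set X).
Hypotheses (Dfb : bounded_functional Df) (Dgb : bounded_linear Dg).
Hypotheses (K0 : 0 <= K) (convT : convex_set_of T).
Hypothesis T_ge0 : forall h, T h -> 0 <= Df h + K * `|Dg h|.

(* The epigraph of the sublinear function
   [y |-> inf {Df k + K |y - Dg k| | k in conic_hull T}]. *)
Definition multiplier_rel : set (Y * R) :=
  [set p | exists2 k, conic_hull T k & Df k + K * `|p.1 - Dg k| <= p.2].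

Lemma multiplier_relD y1 r1 y2 r2 : multiplier_rel (y1, r1) ->
  multiplier_rel (y2, r2) -> multiplier_rel (y1 + y2, r1 + r2).
Proof.
have [[Dfl _] [Dgl _]] := (Dfb, Dgb).
move=> [k1 T1 /= E1] [k2 T2 /= E2]; exists (k1 + k2); first exact: conic_hullD.
rewrite /= (is_linearD Dfl) (is_linearD Dgl).
have : `|y1 + y2 - (Dg k1 + Dg k2)| <= `|y1 - Dg k1| + `|y2 - Dg k2|.
  by rewrite opprD addrACA ler_normD.
move/(ler_wpM2l K0); rewrite mulrDr; lra.
Qed.

Lemma multiplier_relZ y r t : 0 < t ->
  multiplier_rel (y, r) -> multiplier_rel (t *: y, t * r).
Proof.
have [[Dfl _] [Dgl _]] := (Dfb, Dgb).
move=> t0 [k Tk /= E]; exists (t *: k); first exact: conic_hullZ.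
rewrite /= (is_linearZ Dfl) (is_linearZ Dgl) -scalerBr normrZ gtr0_norm //.
by rewrite mulrCA -mulrDr ler_pM2l.
Qed.

Lemma multiplier_rel_norm y : multiplier_rel (y, K * `|y|).
Proof.
have [[Dfl _] [Dgl _]] := (Dfb, Dgb).
by exists 0; [left | rewrite /= (is_linear0 Dfl) (is_linear0 Dgl) subr0 add0r].
Qed.

Lemma multiplier_rel0_ge0 r : multiplier_rel (0, r) -> 0 <= r.
Proof.
have [[Dfl _] [Dgl _]] := (Dfb, Dgb).
move=> [k [->|[t t0 [h Th ->]]]] /=.
  by rewrite (is_linear0 Dfl) (is_linear0 Dgl) subr0 normr0 mulr0 addr0.
rewrite (is_linearZ Dfl) (is_linearZ Dgl) sub0r normrN normrZ gtr0_norm //.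
rewrite mulrCA -mulrDr; apply: le_trans.
by apply: mulr_ge0; [exact: ltW | exact: T_ge0].
Qed.

Theorem lagrange_multiplier : exists ys : Y -> R,
  [/\ bounded_functional ys, dual_norm ys <= K &
      polar_cone T (fun h => - (Df h + ys (Dg h)))].
Proof.
have [l [l_lin l_dom]] := sublinear_hahn_banach multiplier_relD multiplier_relZ
  (fun y => ex_intro (fun r => multiplier_rel (y, r)) _ (multiplier_rel_norm y))
  multiplier_rel0_ge0.
have ll : is_linear (l : Y -> R^o) := l_lin.
have lK y : `|l y| <= K * `|y|.
  rewrite ler_norml (l_dom _ _ (multiplier_rel_norm y)) andbT.
  rewrite lerNl -(is_linearN ll) -(normrN y).
  exact: l_dom (multiplier_rel_norm _).
have ysb : bounded_functional (fun y => - l y).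
  apply: (bounded_functional_le_norm (K := K)) => [c u v|y].
    by rewrite /= l_lin opprD -mulrN.
  by rewrite normrN.
exists (fun y => - l y); split => //.
  by apply: dual_norm_le => // y; rewrite normrN.
split; first exact: bounded_functional_comp Dfb Dgb ysb.
move=> h Th; rewrite oppr_le0 subr_ge0; apply: l_dom.
by exists h; [exact: conic_hull_sub | rewrite /= subrr normr0 mulr0 addr0].
Qed.

End LagrangeMultiplier.

Lemma cvg_addr_limf_einf_ge0 (R : realType) (U : choiceType)
    (T : filteredType U) (F : set_system T) {FF : Filter F} (u w : T -> R)
    (L k : R) :
  0 < k -> u @ F --> L -> (\forall t \near F, 0 <= u t + k * w t) ->
  (0 <= L%:E + k%:E * limf_einf (fun t => (w t)%:E) F)%E.
Proof.
move=> k0 uL uw.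
have liminf_ge eta : 0 < eta ->
    ((- (L + eta) / k)%:E <= limf_einf (fun t => (w t)%:E) F)%E.
  move=> eta0; rewrite limf_einfE.
  pose V := [set t : T | 0 <= u t + k * w t /\ u t < L + eta].
  have FV : F V.
    near=> t; split; first by near: t.
    by near: t; apply: cvgr_lt uL _ _; rewrite ltrDl.
  apply: (@le_trans _ _ (ereal_inf ((fun t => (w t)%:E) @` V))); last first.
    by apply: ereal_sup_ubound; exists V.
  apply: le_ereal_inf_tmp => _ [t [t1 t2] <-].
  by rewrite lee_fin ler_pdivrMr // mulrC; lra.
move: liminf_ge; case: (limf_einf _ _) => [d| |] liminf_ge.
- rewrite -EFinM -EFinD lee_fin leNgt; apply/negP => Ld.
  have := liminf_ge (- (L + k * d) / 2); rewrite lee_fin ler_pdivrMr //.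
  by rewrite mulrC => /(_ ltac:(lra)); lra.
- by rewrite gt0_muley ?lte_fin // addey.
- by have := liminf_ge 1 ltr01.
Unshelve. all: by end_near. Qed.

Lemma near_right_line (R : realType) (X : normedModType R) (x0 h : X)
    (P : X -> Prop) :
  (\forall x \near x0, P x) -> \forall t \near (0 : R)^'+, P (x0 + t *: h).
Proof.
have id0 : (fun t : R => t) @ 0^'+ --> (0 : R).
  by apply: cvg_at_right_filter; exact: cvg_id.
have := cvgD (cvg_cst x0) (cvgZ id0 (cvg_cst h)).
by rewrite scale0r addr0; apply.
Qed.

Section DistanceFunction.
Variables (R : realType) (U : normedModType R).
Implicit Types (A : set U) (x y z : U).

Lemma dist_set_lbound A x : has_lbound [set `|x - a| | a in A].
Proof. by exists 0 => _ [a _ <-]. Qed.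

Lemma dist_set_le A x z : A z -> dist_set A x <= `|x - z|.
Proof. by move=> Az; apply: ge_inf; [exact: dist_set_lbound | exists z]. Qed.

Lemma dist_set_ge0 A x : A !=set0 -> 0 <= dist_set A x.
Proof.
move=> [a Aa]; apply: lb_le_inf; first by exists `|x - a|, a.
by move=> _ [b _ <-].
Qed.

Lemma dist_set_mem A x : A x -> dist_set A x = 0.
Proof.
move=> Ax; apply/le_anti; rewrite dist_set_ge0 ?andbT; last by exists x.
by have := dist_set_le x Ax; rewrite subrr normr0.
Qed.

Lemma dist_set_approx A x eps : A !=set0 -> 0 < eps ->
  exists2 z, A z & `|x - z| < dist_set A x + eps.
Proof.
move=> [a Aa] eps0.
have [_ [z Az <-] xz] := inf_adherent eps0
  (conj (ex_intro _ `|x - a| (ex_intro2 _ _ a Aa erefl)) (dist_set_lbound A x)).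
by exists z.
Qed.

Lemma dist_set_lipschitz A x y : A !=set0 ->
  dist_set A x <= `|x - y| + dist_set A y.
Proof.
move=> An; rewrite -lerBlDl; apply: lb_le_inf.
  by case: An => a Aa; exists `|y - a|, a.
move=> _ [a Aa <-]; rewrite lerBlDl; apply: (le_trans (dist_set_le x Aa)).
by rewrite ler_distD.
Qed.

End DistanceFunction.

Section ClarkeTangentCone.
Variables (R : realType) (U : normedModType R) (A : set U) (x0 : U).

Lemma clarke_tangent_cone0 : clarke_tangent_cone A x0 0.
Proof.
move=> e e0; exists 1 => // y Ay _ t t0 _.
by rewrite scaler0 addr0 dist_set_mem // mul0r normr0.
Qed.

Lemma clarke_tangent_coneZ h lam : clarke_tangent_cone A x0 h -> 0 <= lam ->
  clarke_tangent_cone A x0 (lam *: h).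
Proof.
move=> Th; rewrite le_eqVlt => /orP[/eqP <-|lam0].
  by rewrite scale0r; exact: clarke_tangent_cone0.
move=> e e0; have [d d0 Hd] := Th (e / lam) (divr_gt0 e0 lam0).
exists (Num.min d (d / lam)); first by rewrite lt_min d0 divr_gt0.
move=> y Ay; rewrite lt_min => /andP[yd _] t t0; rewrite lt_min => /andP[_ td].
have tlam0 : 0 < t * lam by rewrite mulr_gt0.
have := Hd y Ay yd (t * lam) tlam0; rewrite -ltr_pdivlMr // => /(_ td) Hlt.
rewrite scalerA; set D := dist_set _ _.
have -> : D / t = D / (t * lam) * lam by field; rewrite !gt_eqF.
by rewrite normrM (gtr0_norm lam0) -ltr_pdivlMr.
Qed.

Lemma clarke_tangent_coneD h1 h2 : A !=set0 -> clarke_tangent_cone A x0 h1 ->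
  clarke_tangent_cone A x0 h2 -> clarke_tangent_cone A x0 (h1 + h2).
Proof.
move=> An T1 T2 e e0.
have e30 : 0 < e / 3 by rewrite divr_gt0.
have [d1 d10 H1] := T1 _ e30; have [d2 d20 H2] := T2 _ e30.
have k0 : 0 < 2 + e + `|h1| by rewrite ltr_wpDr // ltr_wpDr ?ltW.
pose q := d2 / (2 + e + `|h1|).
have q0 : 0 < q by rewrite divr_gt0.
have qE : q * 2 + q * e + q * `|h1| = d2 by rewrite -!mulrDr /q divfK ?gt_eqF.
exists (Num.min d1 (Num.min d2 q)); first by rewrite !lt_min d10 d20 q0.
move=> y Ay; rewrite !lt_min => /and3P[yd1 _ yq] t t0.
rewrite !lt_min => /and3P[td1 td2 tq].
have dist_ge0 z : 0 <= dist_set A z / t by rewrite divr_ge0 ?dist_set_ge0 ?ltW.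
have := H1 y Ay yd1 t t0 td1; rewrite ger0_norm // ltr_pdivrMr // => hd1.
(* [y'] is a near-projection of [y + t h1] onto [A]; the [h2]-estimate is
   applied at [y'], which stays close to [x0]. *)
have [y' Ay' yy'] := dist_set_approx (y + t *: h1) An (mulr_gt0 t0 e30).
have y'd2 : `|y' - x0| < d2.
  have : `|y' - x0| <= `|y + t *: h1 - y'| + `|y - x0| + t * `|h1|.
    rewrite distrC (le_trans (ler_distD (y + t *: h1) _ _)) //.
    rewrite [leLHS]addrC -[leRHS]addrA lerD2l distrC.
    by rewrite addrAC (le_trans (ler_normD _ _)) // normrZ gtr0_norm.
  have : t * e <= q * e by rewrite ler_pM2r // ltW.
  have : 0 <= q * e by rewrite mulr_ge0 // ltW.
  have : e / 3 * t = t * e / 3 /\ t * (e / 3) = t * e / 3 by split; ring.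
  have : t * `|h1| <= q * `|h1| by rewrite ler_wpM2r // ltW.
  move: qE; lra.
have := H2 y' Ay' y'd2 t t0 td2; rewrite ger0_norm // ltr_pdivrMr // => hd2.
rewrite ger0_norm // ltr_pdivrMr //.
apply: (le_lt_trans (dist_set_lipschitz _ (y' + t *: h2) An)).
rewrite scalerDr addrA opprD addrACA subrr addr0; lra.
Qed.

Lemma clarke_tangent_cone_convex : A !=set0 ->
  convex_set_of (clarke_tangent_cone A x0).
Proof.
move=> An u v Tu Tv t /andP[t0 t1]; apply: clarke_tangent_coneD => //.
  exact: clarke_tangent_coneZ.
by apply: clarke_tangent_coneZ; rewrite // subr_ge0.
Qed.

Lemma clarke_tangent_cone_dist_cvg h : A x0 -> clarke_tangent_cone A x0 h ->
  (fun t => dist_set A (x0 + t *: h) / t) @ 0^'+ --> 0.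
Proof.
move=> Ax0 Th; apply/cvgrPdist_lt => e e0; have [d d0 Hd] := Th e e0.
near=> t; rewrite sub0r normrN; apply: Hd; rewrite ?subrr ?normr0 //.
Unshelve. all: by end_near. Qed.

End ClarkeTangentCone.

Section NormBalls.
Variables (R : realType) (X : normedModType R) (x0 : X).

Lemma near_norm_lt e : 0 < e -> \forall x \near x0, `|x - x0| < e.
Proof.
move=> e0; apply: filterS (near_ball x0 e e0) => x.
by rewrite -ball_normE /= distrC.
Qed.

Lemma near_norm_le e : 0 < e -> \forall x \near x0, `|x - x0| <= e.
Proof. by move=> e0; apply: filterS (near_norm_lt e0) => x /ltW. Qed.

End NormBalls.

Section ExactPenalization.
Variables (R : realType) (X : normedModType R) (Phi : X -> R) (A : set X).
Variables (x0 : X) (L rho : R).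
Hypotheses (L0 : 0 < L) (rho0 : 0 < rho) (Ax0 : A x0).
Hypothesis Phi_lip : forall x y, `|x - x0| <= rho -> `|y - x0| <= rho ->
  Phi x <= Phi y + L * `|x - y|.
Hypothesis Phi_min : \forall x \near x0, A x -> Phi x0 <= Phi x.

(* Clarke's exact penalization: compare [z] with a near-projection [c] onto
   [A], which is close enough to [x0] for both hypotheses to apply. *)
Lemma exact_penalization : \forall z \near x0, Phi x0 <= Phi z + L * dist_set A z.
Proof.
have [e e0 ball_min] := (nbhs_normP _ _).1 Phi_min.
pose eta := Num.min rho e / 3.
have eta0 : 0 < eta by rewrite divr_gt0 // lt_min rho0 e0.
have eta_rho : 3 * eta <= rho by rewrite /eta mulrC divfK // ge_min lexx.
have eta_e : 3 * eta <= e by rewrite /eta mulrC divfK // ge_min lexx orbT.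
near=> z; apply/ler_addgt0Pr => eps eps0.
have zx0 : `|z - x0| < eta by near: z; exact: near_norm_lt.
pose del := Num.min (eps / L) eta.
have del0 : 0 < del by rewrite lt_min eta0 divr_gt0.
have del_eps : L * del <= eps by rewrite mulrC -ler_pdivlMr // ge_min lexx.
have del_eta : del <= eta by rewrite ge_min lexx orbT.
have [c Ac zc] := dist_set_approx z (ex_intro _ x0 Ax0) del0.
have dz : dist_set A z <= `|z - x0| := dist_set_le z Ax0.
have cx0 : `|c - x0| < 3 * eta.
  by rewrite (le_lt_trans (ler_distD z _ _)) // distrC; lra.
have Phi_c : Phi x0 <= Phi c.
  by apply: ball_min Ac; rewrite /ball_ /= distrC; lra.
have := @Phi_lip c z ltac:(lra) ltac:(lra).
have : L * `|c - z| <= L * dist_set A z + L * del.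
  by rewrite -mulrDr ler_pM2l // distrC ltW.
lra.
Unshelve. all: by end_near. Qed.

End ExactPenalization.

Section Penalty.
Variables (R : realType) (X Y : normedModType R) (F : X -> R) (g : X -> Y).

Definition penalized (K : R) (x : X) := F x + K * `|g x|.

Lemma penalized_lipschitz (x0 : X) (K Kf Kg rF rg : R) : 0 <= K ->
  (forall x y, `|x - x0| <= rF -> `|y - x0| <= rF ->
     F x <= F y + Kf * `|x - y|) ->
  (forall x y, `|x - x0| <= rg -> `|y - x0| <= rg ->
     `|g x - g y| <= Kg * `|x - y|) ->
  forall x y, `|x - x0| <= Num.min rF rg -> `|y - x0| <= Num.min rF rg ->
    penalized K x <= penalized K y + (Kf + K * Kg) * `|x - y|.
Proof.
move=> K0 F_lip g_lip x y; rewrite !le_min => /andP[xF xg] /andP[yF yg].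
have := F_lip x y xF yF; have := g_lip x y xg yg.
have : `|g x| <= `|g x - g y| + `|g y|.
  by rewrite -[in leLHS](subrK (g y) (g x)) ler_normD.
move=> /(ler_wpM2l K0) gxy /(ler_wpM2l K0) gLip.
rewrite mulrDr in gxy; rewrite mulrA in gLip; rewrite /penalized mulrDl; lra.
Qed.

Lemma calm_exact_penalty (C : set X) (x0 : X) (r Kf a s : R) :
  0 < r -> 0 < Kf -> 0 < s -> C x0 -> g x0 = 0 ->
  (forall x y, `|x - x0| <= r -> `|y - x0| <= r -> F x <= F y + Kf * `|x - y|) ->
  (\forall x \near x0, (g @^-1` [set 0] `&` C) x -> F x0 <= F x) ->
  (forall x, `|x - x0| <= s -> C x ->
     dist_set (g @^-1` [set 0] `&` C) x <= a * `|g x|) ->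
  \forall x \near x0, C x -> penalized (Kf * a) x0 <= penalized (Kf * a) x.
Proof.
move=> r0 Kf0 s0 Cx0 gx0 F_lip F_min calm.
have pen := exact_penalization Kf0 r0 (conj gx0 Cx0) F_lip F_min.
near=> x => Cx.
have xs : `|x - x0| <= s by near: x; exact: near_norm_le.
have Fx : F x0 <= F x + Kf * dist_set (g @^-1` [set 0] `&` C) x by near: x.
have := calm x xs Cx; rewrite -(ler_pM2l Kf0) => calm_x.
rewrite /penalized gx0 normr0 mulr0 addr0 -mulrA; lra.
Unshelve. all: by end_near. Qed.

Lemma dist_exact_penalty (C : set X) (x0 : X) (K Kf Kg rF rg : R) :
  0 <= K -> 0 < Kf + K * Kg -> 0 < rF -> 0 < rg -> C x0 ->
  (forall x y, `|x - x0| <= rF -> `|y - x0| <= rF ->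
     F x <= F y + Kf * `|x - y|) ->
  (forall x y, `|x - x0| <= rg -> `|y - x0| <= rg ->
     `|g x - g y| <= Kg * `|x - y|) ->
  (\forall x \near x0, C x -> penalized K x0 <= penalized K x) ->
  \forall x \near x0,
    penalized K x0 <= penalized K x + (Kf + K * Kg) * dist_set C x.
Proof.
move=> K0 L0 rF0 rg0 Cx0 F_lip g_lip.
have rho0 : 0 < Num.min rF rg by rewrite lt_min rF0 rg0.
exact: exact_penalization L0 rho0 Cx0 (penalized_lipschitz K0 F_lip g_lip).
Qed.

End Penalty.

Section FirstOrderConditions.
Variables (R : realType) (X Y : normedModType R) (F : X -> R) (g : X -> Y).
Variables (x0 : X) (DF : X -> R) (Dg : X -> Y) (K : R) (C : set X).
Hypothesis gx0 : g x0 = 0.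
Hypothesis DF_cvg : forall h,
  (fun t => (F (x0 + t *: h) - F x0) / t) @ 0^'+ --> DF h.
Hypothesis Dg_cvg : forall h,
  (fun t => t^-1 *: (g (x0 + t *: h) - g x0)) @ 0^'+ --> Dg h.

Lemma penalized_quotient_cvg h :
  (fun t => (penalized F g K (x0 + t *: h) - penalized F g K x0) / t) @ 0^'+ -->
  DF h + K * `|Dg h|.
Proof.
have q_cvg : (fun t => (F (x0 + t *: h) - F x0) / t +
    K * `|t^-1 *: (g (x0 + t *: h) - g x0)|) @ 0^'+ --> DF h + K * `|Dg h|.
  by apply: cvgD; [exact: DF_cvg | apply: cvgMl_tmp; exact: cvg_norm].
apply: cvg_trans q_cvg; apply: near_eq_cvg; near=> t.
have t0 : 0 < t by near: t; exact: nbhs_right_gt.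
rewrite /penalized gx0 subr0 normr0 mulr0 addr0 normrZ gtr0_norm ?invr_gt0 //.
by rewrite [in RHS]addrAC [in RHS]mulrDl mulrCA [t^-1 * _]mulrC.
Unshelve. all: by end_near. Qed.

Lemma interior_penalized_ge0 h : interior C x0 ->
  (\forall x \near x0, C x -> penalized F g K x0 <= penalized F g K x) ->
  0 <= DF h + K * `|Dg h|.
Proof.
move=> Cint pen_min; apply: cvgr_to_ge (@penalized_quotient_cvg h) _.
have pen : \forall x \near x0, penalized F g K x0 <= penalized F g K x.
  by apply: filterS2 Cint pen_min => x Cx; apply.
near=> t.
have t0 : 0 < t by near: t; exact: nbhs_right_gt.
have : penalized F g K x0 <= penalized F g K (x0 + t *: h).
  by near: t; exact: near_right_line pen.
by rewrite -subr_ge0 => ?; rewrite divr_ge0 // ltW.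
Unshelve. all: by end_near. Qed.

Variable L : R.
Hypothesis pen_dist : \forall x \near x0,
  penalized F g K x0 <= penalized F g K x + L * dist_set C x.

Lemma penalized_dist_quotient_ge0 h : \forall t \near 0^'+,
  0 <= (penalized F g K (x0 + t *: h) - penalized F g K x0) / t +
       L * (dist_set C (x0 + t *: h) / t).
Proof.
near=> t.
have t0 : 0 < t by near: t; exact: nbhs_right_gt.
have : penalized F g K x0 <=
    penalized F g K (x0 + t *: h) + L * dist_set C (x0 + t *: h).
  by near: t; exact: near_right_line pen_dist.
move=> pen; rewrite mulrA -mulrDl divr_ge0 ?(ltW t0) //; lra.
Unshelve. all: by end_near. Qed.

Lemma dini_penalized_ge0 h : 0 < L ->
  (0 <= (DF h + K * `|Dg h|)%:E + L%:E * dini_lower C x0 h)%E.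
Proof.
move=> L0.
exact: cvg_addr_limf_einf_ge0 L0 (@penalized_quotient_cvg h)
  (penalized_dist_quotient_ge0 h).
Qed.

Lemma clarke_penalized_ge0 h : C x0 -> clarke_tangent_cone C x0 h ->
  0 <= DF h + K * `|Dg h|.
Proof.
move=> Cx0 Th; apply: cvgr_to_ge (penalized_dist_quotient_ge0 h).
rewrite -[X in _ --> X]addr0 -[X in _ --> _ + X](mulr0 L).
apply: cvgD; first exact: penalized_quotient_cvg.
by apply: cvgMl_tmp; exact: clarke_tangent_cone_dist_cvg.
Qed.

Lemma contingent_penalized_ge0 h : 0 < L -> contingent_cone C x0 h ->
  0 <= DF h + K * `|Dg h|.
Proof.
by move=> L0 Th; have := dini_penalized_ge0 h L0; rewrite Th mule0 adde0 lee_fin.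
Qed.

End FirstOrderConditions.

Section ExtendedObjective.
Variables (R : realType) (X : normedModType R) (f : X -> \bar R) (x0 : X).
Variables (r K : R).
Hypotheses (r0 : 0 < r) (fx0 : f x0 \is a fin_num).
Hypothesis f_lip : forall x y, `|x - x0| <= r -> `|y - x0| <= r ->
  (f x <= f y + (K * `|x - y|)%:E)%E.

Lemma lipschitz_fin_num x : `|x - x0| <= r -> f x \is a fin_num.
Proof.
move=> xr; have x0r : `|x0 - x0| <= r by rewrite subrr normr0 (le_trans _ xr).
have := f_lip xr x0r; have := f_lip x0r xr.
by rewrite -(fineK fx0); case: (f x).
Qed.

Lemma near_fin_num : \forall x \near x0, f x \is a fin_num.
Proof. by apply: filterS (near_norm_le x0 r0); exact: lipschitz_fin_num. Qed.

Lemma fine_lipschitz x y : `|x - x0| <= r -> `|y - x0| <= r ->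
  fine (f x) <= fine (f y) + K * `|x - y|.
Proof.
move=> xr yr; have := f_lip xr yr.
rewrite -(fineK (lipschitz_fin_num xr)) -(fineK (lipschitz_fin_num yr)).
by rewrite lee_fin.
Qed.

Lemma near_fine_le (P : X -> Prop) :
  (\forall x \near x0, P x -> (f x0 <= f x)%E) ->
  \forall x \near x0, P x -> fine (f x0) <= fine (f x).
Proof.
apply: filterS2 near_fin_num => x fx; rewrite -lee_fin fineK // fineK //.
Qed.

Lemma fine_quotient_cvg (h : X) (D : R) :
  (fun t => ((f (x0 + t *: h)%R - f x0) * (t^-1)%:E)%E) @ 0^'+ --> D%:E ->
  (fun t => (fine (f (x0 + t *: h)) - fine (f x0)) / t) @ 0^'+ --> D.
Proof.
move=> /fine_cvgP[_]; apply: cvg_trans; apply: near_eq_cvg; near=> t.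
have fz : f (x0 + t *: h) \is a fin_num.
  by near: t; exact: near_right_line near_fin_num.
by rewrite /= -(fineK fz) -(fineK fx0).
Unshelve. all: by end_near. Qed.

End ExtendedObjective.

Theorem theorem3p1 (R : realType)
  (X Y : completeNormedModType R) (C : set X)
  (f : X -> \bar R) (g : X -> Y) (x0 : X)
  (Df : X -> R) (Dg : X -> Y) (r Kf a s : R) :
  C !=set0 -> closed C ->
  (* x0 is a local solution of min { f x | g x = 0, x in C } *)
  C x0 -> g x0 = 0 ->
  (exists2 delta : R, 0 < delta &
     forall x : X, C x -> g x = 0 -> `|x - x0| < delta -> (f x0 <= f x)%E) ->
  (* (H_f) *)
  gateaux_e f x0 Df -> 0 < r -> 0 < Kf ->
  (forall x x' : X, `|x - x0| <= r -> `|x' - x0| <= r ->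
     (f x <= f x' + (Kf * `|x - x'|)%:E)%E) ->
  (* (H_g) *)
  gateaux g x0 Dg ->
  (* calmness of the constraint system at x0 *)
  0 < a -> 0 < s ->
  (forall x : X, `|x - x0| <= s -> C x ->
     dist_set (g @^-1` [set 0] `&` C) x <= a * `|g x|) ->
  (* (i) *)
  ((interior C) x0 ->
     exists ys : Y -> R, [/\ bounded_functional ys, dual_norm ys <= Kf * a &
       forall h : X, Df h + ys (Dg h) = 0])
  /\
  (* (ii) *)
  (forall Kg : R, 0 < Kg ->
     (exists2 delta : R, 0 < delta &
        forall x x' : X, `|x - x0| <= delta -> `|x' - x0| <= delta ->
          `|g x - g x'| <= Kg * `|x - x'|) ->
     [/\ (forall h : X,
            (0 <= (Df h + Kf * a * `|Dg h|)%:E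
                  + (Kf * (1 + Kg * a))%:E * dini_lower C x0 h)%E),
         (exists ys : Y -> R, [/\ bounded_functional ys, dual_norm ys <= Kf * a &
            clarke_normal_cone C x0 (fun h => - (Df h + ys (Dg h)))]) &
         (convex_set_of (contingent_cone C x0) ->
          exists ys : Y -> R, [/\ bounded_functional ys, dual_norm ys <= Kf * a &
            polar_cone (contingent_cone C x0) (fun h => - (Df h + ys (Dg h)))])]).
Proof.
move=> Cne _ Cx0 gx0 [delta delta0 f_min] [fx0 [Dfb Dfd]] r0 Kf0 f_lip [Dgb Dgd]
  a0 s0 calm.
pose F := fine \o f.
have F_lip : forall x y, `|x - x0| <= r -> `|y - x0| <= r ->
  F x <= F y + Kf * `|x - y| := fine_lipschitz fx0 f_lip.
have F_min : \forall x \near x0, (g @^-1` [set 0] `&` C) x -> F x0 <= F x.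
  apply: near_fine_le r0 fx0 f_lip _ _; near=> x => -[gx Cx].
  by apply: f_min => //; near: x; exact: near_norm_lt.
have DF h : (fun t => (F (x0 + t *: h) - F x0) / t) @ 0^'+ --> Df h :=
  fine_quotient_cvg r0 fx0 f_lip (Dfd h).
have pen := calm_exact_penalty r0 Kf0 s0 Cx0 gx0 F_lip F_min calm.
have Kfa0 : 0 <= Kf * a by rewrite mulr_ge0 ?ltW.
split=> [Cint|Kg Kg0 [dg dg0 g_lip]].
  have [ys [ysb ysn ys_polar]] := lagrange_multiplier (T := setT) Dfb Dgb Kfa0
    (fun _ _ _ _ _ _ => I)
    (fun h _ => interior_penalized_ge0 gx0 DF Dgd h Cint pen).
  exists ys; split => // h; apply/eqP; rewrite -oppr_eq0; apply/eqP.
  exact: polar_cone_setT ys_polar h.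
have -> : Kf * (1 + Kg * a) = Kf + Kf * a * Kg by ring.
have L0 : 0 < Kf + Kf * a * Kg by have := mulr_ge0 Kfa0 (ltW Kg0); lra.
have pen_dist := dist_exact_penalty Kfa0 L0 r0 dg0 Cx0 F_lip g_lip pen.
split=> [h||convK].
- exact (dini_penalized_ge0 gx0 DF Dgd pen_dist h L0).
- exact (lagrange_multiplier Dfb Dgb Kfa0
    (clarke_tangent_cone_convex (x0 := x0) Cne)
    (fun h => clarke_penalized_ge0 gx0 DF Dgd pen_dist Cx0)).
- exact (lagrange_multiplier Dfb Dgb Kfa0 convK
    (fun h => contingent_penalized_ge0 gx0 DF Dgd pen_dist L0)).
Unshelve. all: by end_near. Qed.
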